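(* Let $G$ be a finite group with $O^p(G)=G$, let $k$ be a field of characteristic $p$, and let $M$ be a $kG$-module such that, for every composition factor $V$ of $M$, $\dim H^1(G,V)=\dim H^1(G,V^* )$. Suppose that $M$ contains trivial composition factors, but no trivial submodule and no trivial quotient. If $M$ has pressure $n$, then there is no subquotient $A$ of $M$ with pressure greater than $n$ or less than $-n$. In particular, if a module $M$ satisfying the hypotheses on $G$, $k$ and the composition factors has a trivial composition factor but non-positive pressure, then $M$ has a trivial submodule or quotient; and if such an $M$ has a composition factor $V$ whose $1$-cohomology has dimension greater than the pressure of $M$, then $M$ has a trivial submodule or quotient.
   Context: For a finite group $G$ with $H^1(G,k)=0$ (i.e. $O^p(G)=G$) and a $kG$-module $M$ all of whose composition factors $V$ satisfy $\dim H^1(G,V)=\dim H^1(G,V^* )$, the pressure of $M$ is defined as $\sum_{V} (\dim H^1(G,V)-\delta_{V,k})$, where the sum runs over the multiset of composition factors $V$ of $M$ (counted with multiplicity) and $\delta_{V,k}$ is $1$ if $V$ is the trivial module $k$ and $0$ otherwise. The same definition applies to any subquotient $A$ of $M$. *)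

From HB Require Import structures.
From mathcomp Require Import all_boot all_order all_algebra all_fingroup all_solvable.
From mathcomp Require Import mxrepresentation.
Set Implicit Arguments.
Unset Strict Implicit.
Unset Printing Implicit Defensive.
Import GRing.Theory.
Local Open Scope ring_scope.

Section Defs.
Variables (F : fieldType) (gT : finGroupType).

Definition Oup (p : nat) (G : {set gT}) : {set gT} :=
  <<[set x in G | p^'.-elt x]>>%g.

Section H1.
Variables (G : {set gT}) (m : nat) (r : gT -> 'M[F]_m).

(* 1-cochains G -> V (right module V = 'rV_m, g acting by v *m r g),
   encoded as functions on gT; the map below measures the failure of the
   crossed-homomorphism identity f(gh) = f(g) h + f(h) on G x G. *)
Definition cocycle_defect (f : {ffun gT -> 'rV[F]_m}) : {ffun gT * gT -> 'rV[F]_m} :=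
  [ffun xy => if (xy.1 \in G) && (xy.2 \in G)
              then f (xy.1 * xy.2)%g - (f xy.1 *m r xy.2 + f xy.2) else 0].

(* cochains are supported on G *)
Definition off_support (f : {ffun gT -> 'rV[F]_m}) : {ffun gT -> 'rV[F]_m} :=
  [ffun x => if x \in G then 0 else f x].

Definition Z1 : {vspace {ffun gT -> 'rV[F]_m}} :=
  (lker (linfun cocycle_defect) :&: lker (linfun off_support))%VS.

Definition coboundary (v : 'rV[F]_m) : {ffun gT -> 'rV[F]_m} :=
  [ffun x => if x \in G then v *m r x - v else 0].

Definition B1 : {vspace {ffun gT -> 'rV[F]_m}} := limg (linfun coboundary).

Definition H1dim : nat := (\dim Z1 - \dim B1)%N.

End H1.

Definition dual_mx (m : nat) (r : gT -> 'M[F]_m) : gT -> 'M[F]_m :=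
  fun x => (r (x^-1)%g)^T.

Section Modules.
Variables (G : {group gT}).

Definition is_trivial_repr (d : nat) (r : mx_representation F G d) : bool :=
  (d == 1)%N && [forall x in G, r x == 1%:M].

Variables (n : nat) (rG : mx_representation F G n).

Definition full_series (Us : seq 'M[F]_n) : bool := (last 0 Us == 1%:M)%MS.

Definition series_pressure (Us : seq 'M[F]_n)
    (cs : mx_composition_series rG Us) : int :=
  \sum_(i < size Us)
     ((H1dim G (series_repr i cs))%:Z - (is_trivial_repr (series_repr i cs))%:Z).

Definition factors_H1_selfdual : Prop :=
  forall (Us : seq 'M[F]_n) (cs : mx_composition_series rG Us),
    full_series Us -> forall i : nat, (i < size Us)%N ->
    H1dim G (series_repr i cs) = H1dim G (dual_mx (series_repr i cs)).

Definition has_trivial_factor : Prop :=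
  exists (Us : seq 'M[F]_n) (cs : mx_composition_series rG Us),
    full_series Us /\ exists2 i : nat, (i < size Us)%N
                                   & is_trivial_repr (series_repr i cs).

Definition has_trivial_submodule : Prop :=
  exists (U : 'M[F]_n) (modU : mxmodule rG U), is_trivial_repr (submod_repr modU).

Definition has_trivial_quotient : Prop :=
  exists (U : 'M[F]_n) (modU : mxmodule rG U), is_trivial_repr (factmod_repr modU).

End Modules.
End Defs.

(* For a module V put z(V) = dim Z^1(G,V) - dim V.  Since
   dim B^1(G,V) = dim V - dim V^G, we get z(V) = dim H^1(G,V) - dim V^G, so an
   irreducible factor V contributes z(V) to the pressure, and also z(dual V) by
   the hypothesis on H^1 of duals.  Left exactness of Z^1 makes z subadditive
   along 0 -> A -> V -> B -> 0, and z o dual subadditive in the reverse direction.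
   If M has no trivial submodule, a submodule X of M has X^G = 0, hence
   0 <= z(X) <= the pressure of the factors of X: every initial segment of a
   composition series of M has nonnegative pressure.  Dually, with no trivial
   quotient every final segment has nonnegative pressure.  By Jordan-Hoelder
   the pressure of a subquotient U/W is a middle segment of a series through W
   and U, whence -P <= P(U/W) <= P.  Finally O^p(G) = G forces H^1(G,k) = 0, so
   a trivial factor contributes -1, and the two consequences follow by taking
   single factors as segments. *)

From HB Require Import structures.
From mathcomp Require Import all_boot all_order all_algebra all_fingroup all_solvable.
From mathcomp Require Import mxrepresentation zify.
From Stdlib Require Import Classical.
Set Implicit Arguments.
Unset Strict Implicit.
Unset Printing Implicit Defensive.
Import Order.TTheory GRing.Theory Num.Theory.
Local Open Scope ring_scope.

Section Cocycles.
Variables (F : fieldType) (gT : finGroupType) (G : {group gT}).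
Variables (m : nat) (r : gT -> 'M[F]_m).

Fact cocycle_defect_is_linear : linear (cocycle_defect G r).
Proof.
move=> a f g; apply/ffunP=> xy; rewrite !ffunE.
case: ifP => _; last by rewrite scaler0 addr0.
rewrite mulmxDl -scalemxAl scalerBr scalerDr !opprD !addrA; congr (_ - _).
rewrite -!addrA; congr (_ + _); rewrite addrC -!addrA; congr (_ + _).
by rewrite addrC -!addrA addrC -!addrA.
Qed.
HB.instance Definition _ :=
  GRing.isLinear.Build F _ _ _ (cocycle_defect G r) cocycle_defect_is_linear.

Fact off_support_is_linear : linear (@off_support F gT G m).
Proof.
move=> a f g; apply/ffunP=> x; rewrite !ffunE.
by case: ifP => _; rewrite ?scaler0 ?addr0.
Qed.
HB.instance Definition _ :=
  GRing.isLinear.Build F _ _ _ (@off_support F gT G m) off_support_is_linear.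

Fact coboundary_is_linear : linear (coboundary G r).
Proof.
move=> a u v; apply/ffunP=> x; rewrite !ffunE.
case: ifP => _; last by rewrite scaler0 addr0.
rewrite mulmxDl -scalemxAl scalerBr opprD !addrA; congr (_ - _).
by rewrite -!addrA; congr (_ + _); rewrite addrC.
Qed.
HB.instance Definition _ :=
  GRing.isLinear.Build F _ _ _ (coboundary G r) coboundary_is_linear.

Lemma memZ1P (f : {ffun gT -> 'rV[F]_m}) : reflect
  ((forall x y, x \in G -> y \in G -> f (x * y)%g = f x *m r y + f y)
    /\ (forall x, x \notin G -> f x = 0)) (f \in Z1 G r).
Proof.
rewrite memv_cap !memv_ker !lfunE /=; apply: (iffP andP).
  case=> /eqP/ffunP cocf /eqP/ffunP suppf; split=> [x y Gx Gy | x G'x].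
    by have := cocf (x, y); rewrite !ffunE /= Gx Gy => /eqP; rewrite subr_eq0 => /eqP.
  by have := suppf x; rewrite !ffunE (negbTE G'x).
case=> cocf suppf; split; apply/eqP/ffunP.
  by case=> x y; rewrite !ffunE /=; case: ifP => // /andP[Gx Gy]; rewrite cocf ?subrr.
by move=> x; rewrite !ffunE; case: ifPn => // /suppf.
Qed.

Definition Z1dim : nat := \dim (Z1 G r).

Lemma Z1dim_eq0 : m = 0%N -> Z1dim = 0%N.
Proof.
move=> m0; apply/eqP; rewrite -leqn0; apply: leq_trans (dimvS (subvf _)) _.
by rewrite dimvf /dim /= m0 !muln0.
Qed.

Definition fixed_space : {vspace 'rV[F]_m} := lker (linfun (coboundary G r)).

Lemma fixed_spaceP v :
  reflect (forall x, x \in G -> v *m r x = v) (v \in fixed_space).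
Proof.
rewrite memv_ker lfunE /=; apply: (iffP eqP) => [/ffunP fixv x Gx | fixv].
  by have := fixv x; rewrite !ffunE Gx => /eqP; rewrite subr_eq0 => /eqP.
by apply/ffunP=> x; rewrite !ffunE; case: ifP => // Gx; rewrite fixv ?subrr.
Qed.

Lemma fixed_space_eq0 :
  (forall v : 'rV_m, (forall x, x \in G -> v *m r x = v) -> v = 0) ->
  \dim fixed_space = 0%N.
Proof.
move=> fix0; apply/eqP; rewrite dimv_eq0; apply/eqP/vspaceP=> v.
by rewrite memv0; apply/idP/eqP=> [/fixed_spaceP/fix0 // | ->]; apply: mem0v.
Qed.

Lemma dim_fixed_space_B1 : (\dim fixed_space + \dim (B1 G r))%N = m.
Proof.
have dimV : \dim (fullv : {vspace 'rV[F]_m}) = m by rewrite dimvf /dim /= mul1n.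
by rewrite -[RHS]dimV -(limg_ker_dim (linfun (coboundary G r)) fullv) capfv.
Qed.

Hypothesis rM : forall x y, x \in G -> y \in G -> r (x * y)%g = r x *m r y.

Lemma B1_sub_Z1 : (B1 G r <= Z1 G r)%VS.
Proof.
apply/subvP=> _ /memv_imgP[v _ ->]; rewrite lfunE /=.
apply/memZ1P; split=> [x y Gx Gy | x G'x]; rewrite !ffunE; last by rewrite (negbTE G'x).
by rewrite groupM // Gx Gy rM // mulmxBl mulmxA addrA subrK.
Qed.

(* Unlike [H1dim], [dim Z^1 - dim V] is subadditive along short exact sequences. *)
Definition zpressure : int := Z1dim%:Z - m%:Z.

Lemma zpressure_eq0 : m = 0%N -> zpressure = 0.
Proof. by move=> m0; rewrite /zpressure Z1dim_eq0 // m0 subrr. Qed.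

Lemma H1dim_zpressure :
  (H1dim G r)%:Z = zpressure + (\dim fixed_space)%:Z.
Proof.
have BZ := dimvS B1_sub_Z1; have dimB := dim_fixed_space_B1.
rewrite /H1dim /zpressure /Z1dim; move: BZ dimB.
move: (\dim (Z1 G r)) (\dim (B1 G r)) (\dim fixed_space) => z b c; lia.
Qed.

Lemma zpressure_ge0 :
  (forall v : 'rV_m, (forall x, x \in G -> v *m r x = v) -> v = 0) -> 0 <= zpressure.
Proof.
move=> fix0; have := H1dim_zpressure; rewrite fixed_space_eq0 // addr0 => <-.
exact: le0z_nat.
Qed.

End Cocycles.

Section LeftExactness.
Variables (F : fieldType) (gT : finGroupType) (G : {group gT}).

Definition cochain_mulmx d1 d2 (A : 'M[F]_(d1, d2)) (f : {ffun gT -> 'rV[F]_d1}) :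
  {ffun gT -> 'rV[F]_d2} := [ffun x => f x *m A].

Fact cochain_mulmx_is_linear d1 d2 (A : 'M[F]_(d1, d2)) : linear (cochain_mulmx A).
Proof. by move=> a f g; apply/ffunP=> x; rewrite !ffunE mulmxDl scalemxAl. Qed.
HB.instance Definition _ d1 d2 A :=
  GRing.isLinear.Build F _ _ _ (@cochain_mulmx d1 d2 A) (cochain_mulmx_is_linear A).

(* Left exactness of [Z^1] along [V_b -I-> V -P-> V_a], exact at [V]. *)
Lemma Z1dim_le_exact d da db (r : gT -> 'M[F]_d) (ra : gT -> 'M[F]_da)
    (rb : gT -> 'M[F]_db) (I : 'M[F]_(db, d)) (P : 'M[F]_(d, da)) :
    row_free I -> (forall v : 'rV_d, v *m P = 0 -> (v <= I)%MS) ->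
    (forall x, x \in G -> I *m r x = rb x *m I) ->
    (forall x, x \in G -> r x *m P = P *m ra x) ->
  (Z1dim G r <= Z1dim G rb + Z1dim G ra)%N.
Proof.
move=> freeI kerP homI homP; set Phi := linfun (cochain_mulmx P).
rewrite /Z1dim -(limg_ker_dim Phi (Z1 G r)) leq_add //.
  set Psi := linfun (cochain_mulmx I).
  apply: leq_trans (_ : \dim (Psi @: Z1 G rb) <= _)%N; last first.
    by rewrite -(limg_ker_dim Psi (Z1 G rb)) leq_addl.
  apply: dimvS; apply/subvP=> f /memv_capP[/memZ1P[cocf suppf]].
  rewrite memv_ker lfunE /= => /eqP/ffunP fP0.
  have fI x : (f x <= I)%MS by apply: kerP; have := fP0 x; rewrite !ffunE.
  pose g := [ffun x => f x *m pinvmx I].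
  have gI x : g x *m I = f x by rewrite ffunE mulmxKpV.
  apply/memv_imgP; exists g; last by apply/ffunP=> x; rewrite lfunE /= ffunE gI.
  apply/memZ1P; split=> [x y Gx Gy | x G'x]; last by rewrite ffunE suppf // mul0mx.
  apply: (row_free_inj freeI); rewrite /= gI cocf // mulmxDl -mulmxA -homI //.
  by rewrite mulmxA !gI.
apply: dimvS; apply/subvP=> _ /memv_imgP[f /memZ1P[cocf suppf] ->].
rewrite lfunE /=; apply/memZ1P; split=> [x y Gx Gy | x G'x]; rewrite !ffunE.
  by rewrite cocf // mulmxDl -!mulmxA homP.
by rewrite suppf // mul0mx.
Qed.

Lemma exact_ker_sub d da db (I : 'M[F]_(db, d)) (P : 'M[F]_(d, da)) :
    row_free I -> I *m P = 0 -> (db + \rank P)%N = d ->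
  forall v : 'rV_d, v *m P = 0 -> (v <= I)%MS.
Proof.
move=> freeI IP0 dE v vP0.
have sIK : (I <= kermx P)%MS by apply/sub_kermxP.
have rankK : \rank (kermx P) = \rank I.
  rewrite mxrank_ker (eqP freeI); move: dE (rank_leq_row P).
  by move: (\rank P) => rP; lia.
have sKI : (kermx P <= I)%MS.
  by have := mxrank_leqif_sup sIK; rewrite rankK => /leqif_refl.
by apply: submx_trans sKI; apply/sub_kermxP.
Qed.

Lemma dual_mxM m (r : mx_representation F G m) x y : x \in G -> y \in G ->
  dual_mx r (x * y)%g = dual_mx r x *m dual_mx r y.
Proof. by move=> Gx Gy; rewrite /dual_mx invMg repr_mxM ?groupV // trmx_mul. Qed.

Section ShortExact.
Variables (d da db : nat) (r : gT -> 'M[F]_d) (ra : gT -> 'M[F]_da)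
   (rb : gT -> 'M[F]_db) (I : 'M[F]_(db, d)) (P : 'M[F]_(d, da)).
Hypotheses (freeI : row_free I) (fullP : row_full P) (IP0 : I *m P = 0)
   (dE : (db + da)%N = d)
   (homI : forall x, x \in G -> I *m r x = rb x *m I)
   (homP : forall x, x \in G -> r x *m P = P *m ra x).

Lemma zpressure_exact : zpressure G r <= zpressure G rb + zpressure G ra.
Proof.
have dE' : (db + \rank P)%N = d by rewrite (eqP fullP).
have := Z1dim_le_exact freeI (exact_ker_sub freeI IP0 dE') homI homP.
rewrite /zpressure; move: dE (Z1dim G r) (Z1dim G rb) (Z1dim G ra) => <- z zb za; lia.
Qed.

Lemma zpressure_exact_dual :
  zpressure G (dual_mx r) <= zpressure G (dual_mx ra) + zpressure G (dual_mx rb).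
Proof.
have freePt : row_free P^T by rewrite /row_free mxrank_tr.
have PIt0 : P^T *m I^T = 0 by rewrite -trmx_mul IP0 trmx0.
have dE' : (da + \rank I^T)%N = d by rewrite mxrank_tr (eqP freeI) addnC.
have : (Z1dim G (dual_mx r) <= Z1dim G (dual_mx ra) + Z1dim G (dual_mx rb))%N.
  apply: (Z1dim_le_exact freePt (exact_ker_sub freePt PIt0 dE')) => x Gx;
  by rewrite /dual_mx -!trmx_mul ?homP ?homI ?groupV.
rewrite /zpressure; move: dE (Z1dim G (dual_mx r)) => <- z.
move: (Z1dim G (dual_mx ra)) (Z1dim G (dual_mx rb)) => za zb; lia.
Qed.

End ShortExact.

Lemma Z1dim_conj_le d (r1 r2 : gT -> 'M[F]_d) (B : 'M[F]_d) : B \in unitmx ->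
  (forall x, x \in G -> r1 x *m B = B *m r2 x) -> (Z1dim G r1 <= Z1dim G r2)%N.
Proof.
move=> uB hom; have freeB : row_free B by rewrite row_free_unit.
rewrite -[X in (_ <= X)%N]add0n -(Z1dim_eq0 G (fun=> 0 : 'M[F]_0)) //.
apply: (Z1dim_le_exact (I := 0)) hom => [|v vB0|x _].
- by rewrite /row_free mxrank0.
- have -> : v = 0 by apply: (row_free_inj freeB); rewrite /= vB0 mul0mx.
  exact: sub0mx.
- by apply/matrixP=> [[]].
Qed.

Section Similarity.
Variables (n1 n2 : nat) (r1 : mx_representation F G n1) (r2 : mx_representation F G n2).
Hypothesis r12 : mx_rsim r1 r2.

Lemma Z1dim_rsim_le : (Z1dim G r1 <= Z1dim G r2)%N.
Proof.
case: r12 => B def_n1; subst n1; rewrite row_free_unit => uB hom.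
exact: Z1dim_conj_le uB hom.
Qed.

Lemma Z1dim_dual_rsim_le : (Z1dim G (dual_mx r2) <= Z1dim G (dual_mx r1))%N.
Proof.
case: r12 => B def_n1; subst n1; rewrite row_free_unit => uB hom.
apply: (Z1dim_conj_le (B := B^T)); first by rewrite unitmx_tr.
by move=> x Gx; rewrite /dual_mx -!trmx_mul hom ?groupV.
Qed.

End Similarity.

Lemma zpressure_rsim n1 n2 (r1 : mx_representation F G n1)
    (r2 : mx_representation F G n2) : mx_rsim r1 r2 ->
  zpressure G r1 = zpressure G r2 /\ zpressure G (dual_mx r1) = zpressure G (dual_mx r2).
Proof.
move=> r12; have r21 := mx_rsim_sym r12.
have Z1E : Z1dim G r1 = Z1dim G r2.
  by apply/eqP; rewrite eqn_leq !Z1dim_rsim_le.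
have Z1dualE : Z1dim G (dual_mx r1) = Z1dim G (dual_mx r2).
  by apply/eqP; rewrite eqn_leq !Z1dim_dual_rsim_le.
by rewrite /zpressure Z1E Z1dualE (mxrank_rsim r12).
Qed.

End LeftExactness.

Section FixedVectors.
Variables (F : fieldType) (gT : finGroupType) (G : {group gT}).
Variables (m : nat) (rV : mx_representation F G m).

Lemma dual_fixed_col (w : 'rV[F]_m) : (forall x, x \in G -> w *m dual_mx rV x = w) ->
  forall x, x \in G -> rV x *m w^T = w^T.
Proof.
move=> fixw x Gx; have := fixw (x^-1)%g; rewrite groupV /dual_mx invgK => /(_ Gx) wE.
by rewrite -{2}wE trmx_mul trmxK.
Qed.

Lemma trivial_fixed_space_full : is_trivial_repr rV ->
  \dim (fixed_space G rV) = 1%N /\ \dim (fixed_space G (dual_mx rV)) = 1%N.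
Proof.
case/andP=> /eqP m1 /forall_inP rV1.
have dimV : \dim (fullv : {vspace 'rV[F]_m}) = 1%N by rewrite dimvf /dim /= mul1n.
have rV1' x : x \in G -> rV x = 1%:M by move/rV1/eqP.
have dual1 x : x \in G -> dual_mx rV x = 1%:M.
  by move=> Gx; rewrite /dual_mx rV1' ?groupV ?trmx1.
have fixE (r : gT -> 'M[F]_m) :
    (forall x, x \in G -> r x = 1%:M) -> fixed_space G r = fullv.
  move=> r1; apply/eqP; rewrite eqEsubv subvf; apply/subvP=> v _.
  by apply/fixed_spaceP=> x Gx; rewrite r1 ?mulmx1.
by rewrite (fixE _ rV1') (fixE _ dual1) dimV.
Qed.

Lemma irr_fixed_row_trivial (v : 'rV[F]_m) : mx_irreducible rV -> v != 0 ->
  (forall x, x \in G -> v *m rV x = v) -> is_trivial_repr rV.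
Proof.
case/mx_irrP=> m_gt0 irrV nz_v fixv.
have modv : mxmodule rV <<v>>%MS.
  by rewrite (eqmx_module _ (genmxE v)); apply/mxmoduleP=> x Gx; rewrite fixv.
have /row_fullP[B Bv] : row_full v.
  by rewrite /row_full -genmxE; apply: irrV modv _; rewrite -mxrank_eq0 genmxE mxrank_eq0.
apply/andP; split.
  rewrite eqn_leq m_gt0 andbT -(mxrank1 F m) -Bv.
  exact: leq_trans (mxrankM_maxr _ _) (rank_leq_row v).
by apply/forall_inP=> x Gx; rewrite -[rV x]mul1mx -Bv -mulmxA fixv.
Qed.

Lemma irr_fixed_col_trivial (c : 'cV[F]_m) : mx_irreducible rV -> c != 0 ->
  (forall x, x \in G -> rV x *m c = c) -> is_trivial_repr rV.
Proof.
case/mx_irrP=> m_gt0 irrV nz_c fixc.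
have modK : mxmodule rV (kermx c).
  by apply/mxmoduleP=> x Gx; apply/sub_kermxP; rewrite -mulmxA fixc // mulmx_ker.
have [K0 | nzK] := eqVneq (kermx c) 0; last first.
  case/row_fullP: (irrV _ modK nzK) => B BK; case/eqP: nz_c.
  by rewrite -[c]mul1mx -BK -mulmxA mulmx_ker mulmx0.
have freec : row_free c by rewrite -kermx_eq0 K0.
apply/andP; split.
  by rewrite eqn_leq m_gt0 andbT -(eqP freec) rank_leq_col.
apply/forall_inP=> x Gx; apply/eqP; apply: (row_free_inj freec).
by rewrite /= fixc // mul1mx.
Qed.

Lemma dim_fixed_space_irr : mx_irreducible rV ->
  \dim (fixed_space G rV) = is_trivial_repr rV.
Proof.
move=> irrV; have [trivV | ntrivV] := boolP (is_trivial_repr rV).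
  by have [-> _] := trivial_fixed_space_full trivV.
apply: fixed_space_eq0 => v fixv; apply: contraNeq ntrivV => nz_v.
exact: irr_fixed_row_trivial nz_v fixv.
Qed.

Lemma dim_fixed_space_dual_irr : mx_irreducible rV ->
  \dim (fixed_space G (dual_mx rV)) = is_trivial_repr rV.
Proof.
move=> irrV; have [trivV | ntrivV] := boolP (is_trivial_repr rV).
  by have [_ ->] := trivial_fixed_space_full trivV.
apply: fixed_space_eq0 => w fixw; apply: contraNeq ntrivV => nz_w.
apply: (irr_fixed_col_trivial irrV _ (dual_fixed_col fixw)).
by apply: contra nz_w => /eqP/(congr1 trmx); rewrite trmxK trmx0 => ->.
Qed.

Lemma H1dim_irr : mx_irreducible rV ->
  (H1dim G rV)%:Z - (is_trivial_repr rV)%:Z = zpressure G rV.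
Proof.
move=> irrV; rewrite H1dim_zpressure ?dim_fixed_space_irr ?addrK //.
by move=> x y Gx Gy; rewrite repr_mxM.
Qed.

Lemma H1dim_dual_irr : mx_irreducible rV ->
  (H1dim G (dual_mx rV))%:Z - (is_trivial_repr rV)%:Z = zpressure G (dual_mx rV).
Proof.
move=> irrV; rewrite H1dim_zpressure ?dim_fixed_space_dual_irr ?addrK //.
exact: dual_mxM.
Qed.

Lemma fixed_row_trivial_submodule (v : 'rV[F]_m) :
  v != 0 -> (forall x, x \in G -> v *m rV x = v) -> has_trivial_submodule rV.
Proof.
move=> nz_v fixv.
have modU : mxmodule rV <<v>>%MS.
  by rewrite (eqmx_module _ (genmxE v)); apply/mxmoduleP=> x Gx; rewrite fixv.
exists <<v>>%MS, modU; apply/andP; split.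
  by rewrite genmxE eqn_leq rank_leq_row lt0n mxrank_eq0.
apply/forall_inP=> x Gx; apply/eqP; apply: (@val_submod_inj F m <<v>>%MS).
rewrite -[submod_repr modU x]mul1mx (val_submodJ modU) //.
have /submxP[D ->] : (val_submod (1%:M : 'M_(\rank <<v>>%MS)) <= v)%MS.
  by rewrite -(genmxE v) val_submodP.
by rewrite -mulmxA fixv.
Qed.

Lemma fixed_col_trivial_quotient (c : 'cV[F]_m) :
  c != 0 -> (forall x, x \in G -> rV x *m c = c) -> has_trivial_quotient rV.
Proof.
move=> nz_c fixc.
have modK : mxmodule rV (kermx c).
  by apply/mxmoduleP=> x Gx; apply/sub_kermxP; rewrite -mulmxA fixc // mulmx_ker.
exists (kermx c), modK; apply/andP; split.
  rewrite mxrank_coker mxrank_ker subKn ?rank_leq_row //.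
  by rewrite eqn_leq rank_leq_col lt0n mxrank_eq0.
apply/forall_inP=> x Gx; apply/eqP.
rewrite /= /factmod_mx -[RHS](val_factmodK (U := kermx c)).
apply/eqP; rewrite -subr_eq0 -linearB /= in_factmod_eq0.
by apply/sub_kermxP; rewrite mulmxBl -mulmxA fixc // subrr.
Qed.

End FixedVectors.

Section TrivialAction.
Variables (F : fieldType) (gT : finGroupType) (G : {group gT}) (p : nat).
Hypotheses (charFp : p \in [pchar F]) (OpG : Oup p G = G).

(* A cocycle for the trivial action is a homomorphism into [F^d], whose
   exponent is [p]; it kills every p'-element, hence all of [O^p(G) = G]. *)
Lemma H1dim_trivial_action d (r : gT -> 'M[F]_d) :
  (forall x, x \in G -> r x = 1%:M) -> H1dim G r = 0%N.
Proof.
move=> r1; suff Z1_0 : Z1 G r = 0%VS by rewrite /H1dim Z1_0 dimv0.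
apply/vspaceP=> f; rewrite memv0; apply/idP/eqP=> [/memZ1P[cocf suppf] | ->]; last first.
  exact: mem0v.
have fM x y : x \in G -> y \in G -> f (x * y)%g = f x + f y.
  by move=> Gx Gy; rewrite cocf // r1 // mulmx1.
have f1 : f 1%g = 0 by apply: (@addrI _ (f 1%g)); rewrite -fM ?group1 // mulg1 addr0.
have fX x k : x \in G -> f (x ^+ k)%g = f x *+ k.
  move=> Gx; elim: k => [|k IHk]; first by rewrite expg0 f1 mulr0n.
  by rewrite expgS fM ?groupX // IHk mulrS.
set K := [set x in G | f x == 0].
have groupK : group_set K.
  apply/group_setP; split; first by rewrite inE group1 f1 eqxx.
  move=> x y /setIdP[Gx /eqP fx0] /setIdP[Gy /eqP fy0].
  by rewrite inE groupM // fM // fx0 fy0 addr0 eqxx.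
have sGK : G \subset Group groupK.
  rewrite -{1}OpG /Oup gen_subG; apply/subsetP=> x /setIdP[Gx p'x].
  rewrite inE Gx /=; have := fX x #[x]%g Gx; rewrite expg_order f1 => /esym/eqP.
  rewrite -scaler_nat scaler_eq0 => /orP[|//]; rewrite -(dvdn_pcharf charFp) => p_x.
  by move: p'x; rewrite /p_elt (p'natE _ (pcharf_prime charFp)) p_x.
apply/ffunP=> x; rewrite ffunE; have [Gx | /suppf //] := boolP (x \in G).
by have := subsetP sGK x Gx; rewrite inE => /andP[_ /eqP].
Qed.

End TrivialAction.

Section Sections.
Variables (F : fieldType) (gT : finGroupType) (G : {group gT}).
Variables (d : nat) (R : mx_representation F G d).

Lemma rank_section (X Y : 'M[F]_d) : (X <= Y)%MS ->
  (\rank <<in_factmod X Y>>%MS + \rank X)%N = \rank Y.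
Proof. by move=> sXY; rewrite genmxE mxrank_in_factmod (addsmx_idPr sXY). Qed.

Lemma rank_section_id (X : 'M[F]_d) : \rank <<in_factmod X X>>%MS = 0%N.
Proof. by rewrite genmxE; apply/eqP; rewrite mxrank_eq0 in_factmod_eq0. Qed.

(* Rows of [section_lift X Y] lift the standard basis of the section [Y / X]
   back into [Y]; they span a complement of [X] in [Y]. *)
Definition section_lift (X Y : 'M[F]_d) : 'M[F]_(\rank <<in_factmod X Y>>%MS, d) :=
  val_factmod (U := X) (val_submod (U := <<in_factmod X Y>>%MS) 1%:M).

Lemma mulmx_section_lift (X Y : 'M[F]_d) k (Z : 'M_(k, \rank <<in_factmod X Y>>%MS)) :
  Z *m section_lift X Y = val_factmod (val_submod Z).
Proof.
by rewrite /section_lift val_factmodE (val_factmodE (val_submod Z)) mulmxA -val_submodE.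
Qed.

Lemma section_lift_free X Y : row_free (section_lift X Y).
Proof.
apply/row_freeP; exists (in_factmod X 1%:M *m in_submod <<in_factmod X Y>>%MS 1%:M).
by rewrite mulmxA -in_factmodE -in_submodE val_factmodK val_submodK.
Qed.

Lemma section_lift_adds X Y : (X <= Y)%MS -> (X + section_lift X Y :=: Y)%MS.
Proof.
move=> sXY; apply: eqmx_trans (in_factmodsK sXY); apply: adds_eqmx => //.
rewrite /section_lift val_factmodE (val_factmodE (in_factmod X Y)).
by apply: eqmxMr; apply: eqmx_trans (val_submod1 _) _; apply: genmxE.
Qed.

Lemma section_lift_sub X Y : (X <= Y)%MS -> (section_lift X Y <= Y)%MS.
Proof. by move=> sXY; rewrite -(section_lift_adds sXY) addsmxSr. Qed.

Lemma section_liftJ X Y (modX : mxmodule R X) (modY : mxmodule R Y) x : x \in G ->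
  (section_repr modX modY x *m section_lift X Y - section_lift X Y *m R x <= X)%MS.
Proof.
move=> Gx; rewrite -[section_repr _ _ x]mul1mx !mulmx_section_lift.
rewrite val_submodJ ?val_factmodJ //; set Z := val_factmod _ *m R x.
rewrite -{2}(add_sub_fact_mod X Z) opprD addrA addrC addrA addNr add0r.
by rewrite eqmx_opp val_submodP.
Qed.

Definition quotient_proj (X : 'M[F]_d) : 'M[F]_(d, \rank <<in_factmod X 1%:M>>%MS) :=
  in_submod <<in_factmod X 1%:M>>%MS (in_factmod X 1%:M).

Lemma quotient_proj_full X : row_full (quotient_proj X).
Proof. by rewrite /row_full mxrank_in_submod ?genmxE. Qed.

Lemma quotient_proj_ker X : X *m quotient_proj X = 0.
Proof.
rewrite /quotient_proj in_submodE in_factmodE mul1mx mulmxA -in_factmodE -in_submodE.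
by rewrite (eqP (_ : in_factmod X X == 0)) ?in_factmod_eq0 // linear0.
Qed.

Lemma quotient_projJ X (modX : mxmodule R X) (mod1 : mxmodule R 1%:M) x : x \in G ->
  R x *m quotient_proj X = quotient_proj X *m section_repr modX mod1 x.
Proof.
move=> Gx; rewrite /quotient_proj -in_submodJ ?genmxE // -in_factmodJ //.
by rewrite mul1mx in_submodE (in_factmodE _ (R x)) [RHS]in_submodE mulmxA.
Qed.

Lemma rsim_section (X Y : 'M[F]_d) (modX : mxmodule R X) (modY : mxmodule R Y)
    k (T : mx_representation F G k) (E : 'M[F]_(k, d)) :
    (X <= Y)%MS -> (X + E :=: Y)%MS -> (k + \rank X)%N = \rank Y ->
    (forall x, x \in G -> (T x *m E - E *m R x <= X)%MS) ->
  mx_rsim T (section_repr modX modY).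
Proof.
move=> sXY defY rankY homE; set S := <<in_factmod X Y>>%MS.
have sES : (in_factmod X E <= S)%MS by rewrite genmxE submxMr // -defY addsmxSr.
exists (in_submod S (in_factmod X E)).
- by apply/eqP; rewrite -(eqn_add2r (\rank X)) rankY rank_section.
- rewrite /row_free mxrank_in_submod //.
  by rewrite -(eqn_add2r (\rank X)) rankY mxrank_in_factmod defY.
move=> x Gx; rewrite -in_submodJ // -in_factmodJ //.
rewrite in_submodE in_factmodE mulmxA -in_factmodE -in_submodE; congr (in_submod _ _).
rewrite (in_factmodE _ E) mulmxA -in_factmodE.
by apply/eqP; rewrite -subr_eq0 -linearB /= in_factmod_eq0 homE.
Qed.

End Sections.

Section Preimage.
Variables (F : fieldType) (gT : finGroupType) (G : {group gT}).
Variables (d : nat) (R : mx_representation F G d).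
Variables (W U : 'M[F]_d) (modW : mxmodule R W) (modU : mxmodule R U).
Hypothesis sWU : (W <= U)%MS.
Local Notation kA := (\rank <<in_factmod W U>>%MS).
Local Notation A := (section_repr modW modU).

Definition section_preimage (Y : 'M[F]_kA) : 'M[F]_d := (W + Y *m section_lift W U)%MS.
Local Notation preimage := section_preimage.

Lemma section_preimage_module Y : mxmodule A Y -> mxmodule R (preimage Y).
Proof.
move=> modY; rewrite /preimage mulmx_section_lift (val_factmod_module modW).
by rewrite (val_submod_module (section_module modW modU)).
Qed.

Lemma rank_section_preimage Y : \rank (preimage Y) = (\rank W + \rank Y)%N.
Proof.
rewrite /preimage mxrank_disjoint_sum; last first.
  apply/eqP; rewrite -submx0 -(capmx_compl W) capmxS //.
  by rewrite mulmx_section_lift val_factmodP.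
by rewrite mxrankMfree // section_lift_free.
Qed.

Lemma section_preimageS Y1 Y2 : (Y1 <= Y2)%MS -> (preimage Y1 <= preimage Y2)%MS.
Proof. by move=> sY12; rewrite addsmxS // submxMr. Qed.

Lemma eqmx_section_preimage Y1 Y2 : (Y1 :=: Y2)%MS -> (preimage Y1 :=: preimage Y2)%MS.
Proof. by move=> eY12; apply: adds_eqmx => //; apply: eqmxMr. Qed.

Lemma section_preimage0 : (preimage 0 :=: W)%MS.
Proof. by rewrite /preimage mul0mx; apply: addsmx0. Qed.

Lemma section_preimage1 : (preimage 1%:M :=: U)%MS.
Proof. by rewrite /preimage mul1mx; apply: section_lift_adds. Qed.

Lemma section_preimage_rsim Y1 Y2 (modY1 : mxmodule A Y1) (modY2 : mxmodule A Y2)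
    (modPY1 : mxmodule R (preimage Y1)) (modPY2 : mxmodule R (preimage Y2)) :
  (Y1 <= Y2)%MS -> mx_rsim (section_repr modY1 modY2) (section_repr modPY1 modPY2).
Proof.
move=> sY12; set E1 := section_lift Y1 Y2; set E := section_lift W U.
apply: (rsim_section _ _ (E := E1 *m E)) => [||| x Gx].
- exact: section_preimageS.
- rewrite /preimage -addsmxA; apply: adds_eqmx => //.
  apply: eqmx_trans (eqmx_sym (addsmxMr _ _ _)) _.
  exact: eqmxMr (section_lift_adds sY12).
- by rewrite !rank_section_preimage addnCA (rank_section sY12).
have -> : section_repr modY1 modY2 x *m (E1 *m E) - E1 *m E *m R x =
    (section_repr modY1 modY2 x *m E1 - E1 *m A x) *m E + E1 *m (A x *m E - E *m R x).
  by rewrite mulmxBl mulmxBr !mulmxA addrA subrK.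
rewrite addmx_sub //.
  by rewrite (submx_trans _ (addsmxSr _ _)) // submxMr // section_liftJ.
apply: submx_trans (submxMl _ _) _.
by rewrite (submx_trans _ (addsmxSl _ _)) // section_liftJ.
Qed.

Lemma section_preimage_max_submod Y1 Y2 : mxmodule A Y1 -> mxmodule A Y2 ->
  max_submod A Y1 Y2 -> max_submod R (preimage Y1) (preimage Y2).
Proof.
move=> modY1 modY2 maxY12; have sY12 : (Y1 <= Y2)%MS by case: maxY12 => /ltmxW.
have modPY1 := section_preimage_module modY1.
have modPY2 := section_preimage_module modY2.
apply/(max_submodP modPY1 modPY2 (section_preimageS sY12)).
apply: mx_rsim_irr (section_preimage_rsim modY1 modY2 modPY1 modPY2 sY12) _.
exact/(max_submodP modY1 modY2 sY12).
Qed.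

End Preimage.

Section Subadditivity.
Variables (F : fieldType) (gT : finGroupType) (G : {group gT}).

Lemma zpressure_submod_subadd e (B : mx_representation F G e) (Y : 'M_e)
    (modY : mxmodule B Y) (mod0 : mxmodule B 0) (mod1 : mxmodule B 1%:M) :
  zpressure G B <= zpressure G (section_repr mod0 modY)
                   + zpressure G (section_repr modY mod1) /\
  zpressure G (dual_mx B) <= zpressure G (dual_mx (section_repr mod0 modY))
                             + zpressure G (dual_mx (section_repr modY mod1)).
Proof.
have IP0 : section_lift 0 Y *m quotient_proj Y = 0.
  have /submxP[D ->] : (section_lift 0 Y <= Y)%MS by rewrite section_lift_sub ?sub0mx.
  by rewrite -mulmxA quotient_proj_ker mulmx0.
have dimE : (\rank <<in_factmod 0 Y>>%MS + \rank <<in_factmod Y 1%:M>>%MS)%N = e.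
  move: (rank_section (sub0mx e Y)) (rank_section (submx1 Y)).
  by rewrite mxrank0 mxrank1; lia.
have homI x : x \in G ->
    section_lift 0 Y *m B x = section_repr mod0 modY x *m section_lift 0 Y.
  by move=> Gx; have := section_liftJ mod0 modY Gx; rewrite submx0 subr_eq0 => /eqP ->.
have homP x : x \in G ->
    B x *m quotient_proj Y = quotient_proj Y *m section_repr modY mod1 x.
  exact: quotient_projJ.
have freeI := section_lift_free 0 Y; have fullP := quotient_proj_full Y.
split; first exact: zpressure_exact freeI fullP IP0 dimE homI homP.
by rewrite addrC; apply: zpressure_exact_dual freeI fullP IP0 dimE homI homP.
Qed.

Variables (d : nat) (R : mx_representation F G d).

Lemma zpressure_section_subadd (X Y Z : 'M_d)
    (modX : mxmodule R X) (modY : mxmodule R Y) (modZ : mxmodule R Z) :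
    (X <= Y)%MS -> (Y <= Z)%MS ->
  zpressure G (section_repr modX modZ) <=
    zpressure G (section_repr modX modY) + zpressure G (section_repr modY modZ) /\
  zpressure G (dual_mx (section_repr modX modZ)) <=
    zpressure G (dual_mx (section_repr modX modY))
    + zpressure G (dual_mx (section_repr modY modZ)).
Proof.
move=> sXY sYZ; have sXZ := submx_trans sXY sYZ.
set B := section_repr modX modZ; set S := <<in_factmod X Z>>%MS.
have sYS : (in_factmod X Y <= S)%MS by rewrite genmxE submxMr.
set Y' := <<in_submod S (in_factmod X Y)>>%MS.
have modY' : mxmodule B Y'.
  rewrite (eqmx_module _ (genmxE _)) (in_submod_module (section_module modX modZ)) //.
  by rewrite (in_factmod_module modX) addsmx_module.
have mod0 : mxmodule B (0 : 'M_(\rank S)) := mxmodule0 B _.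
have mod1 : mxmodule B 1%:M := mxmodule1 B.
have P0 := section_preimage_module mod0; have P1 := section_preimage_module mod1.
have PY := section_preimage_module modY'.
have PYE : (section_preimage (W := X) (U := Z) Y' :=: Y)%MS.
  apply: eqmx_trans (in_factmodsK sXY); apply: adds_eqmx => //.
  by apply: eqmx_trans (eqmxMr _ (genmxE _)) _; rewrite mulmx_section_lift in_submodK.
have rsim1 : mx_rsim (section_repr mod0 modY') (section_repr modX modY).
  apply: mx_rsim_trans (section_preimage_rsim mod0 modY' P0 PY (sub0mx _ _)) _.
  exact: section_eqmx (section_preimage0 X Z) PYE.
have rsim2 : mx_rsim (section_repr modY' mod1) (section_repr modY modZ).
  apply: mx_rsim_trans (section_preimage_rsim modY' mod1 PY P1 (submx1 _)) _.
  exact: section_eqmx PYE (section_preimage1 sXZ).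
have [<- <-] := zpressure_rsim rsim1; have [<- <-] := zpressure_rsim rsim2.
exact: zpressure_submod_subadd.
Qed.

End Subadditivity.

Section NoTrivialEnds.
Variables (F : fieldType) (gT : finGroupType) (G : {group gT}).
Variables (d : nat) (R : mx_representation F G d).

Lemma zpressure_submod_ge0 (Y : 'M_d) (mod0 : mxmodule R 0) (modY : mxmodule R Y) :
  ~ has_trivial_submodule R -> 0 <= zpressure G (section_repr mod0 modY).
Proof.
move=> no_sub; apply: zpressure_ge0 => [x y Gx Gy | v fixv]; first by rewrite repr_mxM.
apply/eqP/negPn/negP => nz_v; apply: no_sub.
apply: (@fixed_row_trivial_submodule _ _ _ _ R (v *m section_lift 0 Y)).
  apply: contra nz_v => /eqP vE0; apply/eqP.
  by apply: (row_free_inj (section_lift_free 0 Y)); rewrite /= vE0 mul0mx.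
move=> x Gx; have := section_liftJ mod0 modY Gx; rewrite submx0 subr_eq0 => /eqP E.
by rewrite -mulmxA -E mulmxA fixv.
Qed.

Lemma zpressure_dual_quotient_ge0 (X : 'M_d) (modX : mxmodule R X)
    (mod1 : mxmodule R 1%:M) :
  ~ has_trivial_quotient R -> 0 <= zpressure G (dual_mx (section_repr modX mod1)).
Proof.
move=> no_quot; apply: zpressure_ge0 => [x y Gx Gy | w fixw]; first exact: dual_mxM.
apply/eqP/negPn/negP => nz_w; apply: no_quot.
have fixwT := dual_fixed_col fixw.
apply: (@fixed_col_trivial_quotient _ _ _ _ R (quotient_proj X *m w^T)).
  case/row_fullP: (quotient_proj_full X) => B BP.
  apply: contra nz_w => /eqP Pw0; apply/eqP; apply: trmx_inj.
  by rewrite trmx0 -[w^T]mul1mx -BP -mulmxA Pw0 mulmx0.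
by move=> x Gx; rewrite mulmxA (quotient_projJ modX mod1 Gx) -mulmxA fixwT.
Qed.

End NoTrivialEnds.

Section Series.
Variables (F : fieldType) (gT : finGroupType) (G : {group gT}).
Variables (n : nat) (rG : mx_representation F G n).

Section OneSeries.
Variables (Us : seq 'M[F]_n) (cs : mx_composition_series rG Us).

Definition factor_pressure i : int :=
  (H1dim G (series_repr i cs))%:Z - (is_trivial_repr (series_repr i cs))%:Z.

Lemma series_pressureE : series_pressure cs = \sum_(0 <= i < size Us) factor_pressure i.
Proof. by rewrite /series_pressure big_mkord. Qed.

Lemma series_pressure_split j : (j <= size Us)%N ->
  series_pressure cs = \sum_(0 <= i < j) factor_pressure i
                       + \sum_(j <= i < size Us) factor_pressure i.
Proof. by move=> le_j; rewrite series_pressureE -big_cat_nat. Qed.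

Lemma factor_pressureE i :
  (i < size Us)%N -> factor_pressure i = zpressure G (series_repr i cs).
Proof. by move=> lt_i; rewrite /factor_pressure H1dim_irr //; apply: mx_series_repr_irr. Qed.

Lemma factor_pressure_dualE i : factors_H1_selfdual rG -> full_series Us ->
  (i < size Us)%N -> factor_pressure i = zpressure G (dual_mx (series_repr i cs)).
Proof.
move=> selfdual fullUs lt_i.
rewrite /factor_pressure (selfdual _ cs fullUs i lt_i) H1dim_dual_irr //.
exact: mx_series_repr_irr.
Qed.

Local Notation X i := ((0 :: Us)`_i).
Let modUs := proj1 cs.

Lemma subseries_sub i : (i < size Us)%N -> (X i <= X i.+1)%MS.
Proof. by move=> lt_i; case: (proj2 cs i lt_i) => /ltmxW. Qed.

Lemma subseries_mono i j : (i <= j <= size Us)%N -> (X i <= X j)%MS.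
Proof.
case/andP=> le_ij le_j; elim: j le_ij le_j => [|j IHj]; first by rewrite leqn0 => /eqP->.
rewrite leq_eqVlt => /orP[/eqP-> // | ]; rewrite ltnS => le_ij lt_j.
exact: submx_trans (IHj le_ij (ltnW lt_j)) (subseries_sub lt_j).
Qed.

Lemma zpressure_prefix_le j : (j <= size Us)%N ->
  forall (mod0 : mxmodule rG 0) (modj : mxmodule rG (X j)),
  zpressure G (section_repr mod0 modj) <= \sum_(0 <= i < j) factor_pressure i.
Proof.
elim: j => [|j IHj] le_j mod0 modj.
  by rewrite big_geq // zpressure_eq0 // rank_section_id.
have [subadd _] := zpressure_section_subadd mod0 (mx_subseries_module' j modUs) modj
  (sub0mx _ _) (subseries_sub le_j).
apply: le_trans subadd _; rewrite big_nat_recr //= lerD ?IHj ?(ltnW le_j) //.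
by rewrite factor_pressureE // (bool_irrelevance modj (mx_subseries_module j modUs)).
Qed.

Lemma zpressure_dual_suffix_le : factors_H1_selfdual rG -> full_series Us ->
  forall t j, (j + t)%N = size Us ->
  forall (modj : mxmodule rG (X j)) (modL : mxmodule rG (X (size Us))),
  zpressure G (dual_mx (section_repr modj modL))
    <= \sum_(j <= i < size Us) factor_pressure i.
Proof.
move=> selfdual fullUs; elim=> [|t IHt] j jtE modj modL.
  rewrite addn0 in jtE; move: modj; rewrite jtE => modj.
  by rewrite big_geq // zpressure_eq0 // rank_section_id.
have lt_j : (j < size Us)%N by rewrite -jtE -addSnnS leq_addr.
have [_ subadd] := zpressure_section_subadd modj (mx_subseries_module' j.+1 modUs) modL
  (subseries_sub lt_j) (subseries_mono (introT andP (conj lt_j (leqnn _)))).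
apply: le_trans subadd _; rewrite big_ltn // lerD ?IHt ?addSnnS //.
rewrite (bool_irrelevance modj (mx_subseries_module' j modUs)).
rewrite (bool_irrelevance (mx_subseries_module' j.+1 modUs) (mx_subseries_module j modUs)).
by rewrite factor_pressure_dualE.
Qed.

(* Prefix sums dominate [zpressure] of the fixed-point-free submodule [X j];
   suffix sums dominate the dual [zpressure] of the quotient [M / X j]. *)
Lemma partial_pressures_ge0 : factors_H1_selfdual rG -> full_series Us ->
    ~ has_trivial_submodule rG -> ~ has_trivial_quotient rG ->
  forall j, (j <= size Us)%N ->
  0 <= \sum_(0 <= i < j) factor_pressure i /\
  0 <= \sum_(j <= i < size Us) factor_pressure i.
Proof.
move=> selfdual fullUs no_sub no_quot j le_j; split.
  have mod0 : mxmodule rG 0 := mxmodule0 rG n.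
  apply: le_trans (zpressure_prefix_le le_j mod0 (mx_subseries_module' j modUs)).
  exact: zpressure_submod_ge0.
have modL := mx_subseries_module' (size Us) modUs.
apply: le_trans (zpressure_dual_suffix_le selfdual fullUs (subnKC le_j)
  (mx_subseries_module' j modUs) modL).
have mod1 : mxmodule rG 1%:M := mxmodule1 rG.
have LE : (X (size Us) :=: 1%:M)%MS by apply/eqmxP; rewrite -last_nth.
have [_ ->] := zpressure_rsim (section_eqmx (mx_subseries_module' j modUs)
  (mx_subseries_module' j modUs) modL mod1 (eqmx_refl _) LE).
exact: zpressure_dual_quotient_ge0.
Qed.

End OneSeries.

Lemma series_pressure_JH (Us Vs : seq 'M[F]_n) (cs : mx_composition_series rG Us)
    (cs' : mx_composition_series rG Vs) :
  full_series Us -> full_series Vs -> series_pressure cs = series_pressure cs'.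
Proof.
move=> /eqmxP fullUs /eqmxP fullVs.
have [sizeE [perm_i rsim_i]] :=
  mx_JordanHolder cs cs' (eqmx_trans fullUs (eqmx_sym fullVs)).
have presE Ws (c : mx_composition_series rG Ws) :
  series_pressure c = \sum_(i < size Ws) factor_pressure c i by [].
rewrite !presE; transitivity (\sum_(i < size Us) factor_pressure cs' (perm_i i)).
  apply: eq_bigr => i _.
  have lt_pi : (perm_i i < size Vs)%N := leq_trans (ltn_ord _) (eq_leq sizeE).
  by rewrite !factor_pressureE //; have [] := zpressure_rsim (rsim_i i).
transitivity (\sum_(i < size Us) factor_pressure cs' i).
  by rewrite [RHS](reindex_inj (@perm_inj _ perm_i)).
by rewrite -!(big_mkord xpredT (factor_pressure cs')) sizeE.
Qed.

End Series.

Lemma nth_cons_cat (T : Type) (x0 x : T) (s1 s2 : seq T) k :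
  nth x0 (x :: s1 ++ s2) (size s1 + k) = nth x0 (last x s1 :: s2) k.
Proof. by elim: s1 x => [|y s1 IHs1] x //=; rewrite addSn /= IHs1. Qed.

Section SeriesFrom.
Variables (F : fieldType) (gT : finGroupType) (G : {group gT}).
Variables (n : nat) (rG : mx_representation F G n).

(* A composition series of [rG] starting at [X]; for [X = 0] this is
   [mx_composition_series rG L] by conversion. *)
Definition mx_series_from (X : 'M[F]_n) (L : seq 'M[F]_n) : Prop :=
  all (@mxmodule F gT G n rG n) L
  /\ (forall i, (i < size L)%N -> max_submod rG (X :: L)`_i L`_i).

Lemma mx_series_from_cat X L1 L2 :
  mx_series_from X L1 -> mx_series_from (last X L1) L2 -> mx_series_from X (L1 ++ L2).
Proof.
case=> modL1 maxL1 [modL2 maxL2]; split; first by rewrite all_cat modL1.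
move=> i; rewrite size_cat => lt_i; have [lt_i1 | le_i1] := ltnP i (size L1).
  by rewrite -cat_cons !nth_cat /= ltnS (ltnW lt_i1) lt_i1; apply: maxL1.
rewrite -(subnKC le_i1) nth_cons_cat nth_cat ltnNge leq_addr /= addKn.
by apply: maxL2; rewrite -(ltn_add2l (size L1)) subnKC.
Qed.

Lemma eqmx_mx_series_from X Y L : (X :=: Y)%MS -> mx_series_from X L -> mx_series_from Y L.
Proof.
move=> eqXY [modL maxL]; split=> // [[|i]] lt_i; last exact: (maxL i.+1 lt_i).
exact: max_submod_eqmx (maxL 0%N lt_i).
Qed.

Lemma last_eqmx (X Y : 'M[F]_n) L : (X :=: Y)%MS -> (last X L :=: last Y L)%MS.
Proof. by case: L => //= *; apply: eqmx_refl. Qed.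

Variables (X Y : 'M[F]_n) (modX : mxmodule rG X) (modY : mxmodule rG Y).
Hypothesis sXY : (X <= Y)%MS.
Variables (Vs : seq 'M[F]_(\rank <<in_factmod X Y>>%MS))
  (csV : mx_composition_series (section_repr modX modY) Vs).
Local Notation preimage := (section_preimage (W := X) (U := Y)).

Lemma mx_series_from_preimage : mx_series_from X (map preimage Vs).
Proof.
case: csV => modVs maxVs; split.
  by rewrite all_map; apply/allP=> V VsV; apply: section_preimage_module (allP modVs _ VsV).
move=> i; rewrite size_map => lt_i.
have := section_preimage_max_submod (mx_subseries_module' i modVs)
  (mx_subseries_module i modVs) (maxVs i lt_i).
rewrite (nth_map 0) //; apply: max_submod_eqmx => //.
case: i lt_i => [|i] lt_i /=; first exact: section_preimage0.
by rewrite (nth_map 0) // ltnW.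
Qed.

Lemma last_section_preimage : full_series Vs -> (last X (map preimage Vs) :=: Y)%MS.
Proof.
move=> /eqmxP fullVs; case: Vs csV fullVs => [|V Vs'] _ /= fullVs; last first.
  by rewrite last_map; apply: eqmx_trans (eqmx_section_preimage fullVs) _;
     apply: section_preimage1.
have rank0 : \rank <<in_factmod X Y>>%MS = 0%N.
  by rewrite -(mxrank1 F (\rank <<in_factmod X Y>>%MS)) -fullVs mxrank0.
have := rank_section sXY; rewrite rank0 add0n => rankXY.
have := mxrank_leqif_sup sXY; rewrite rankXY => /leqif_refl sYX.
by apply/eqmxP/andP.
Qed.

End SeriesFrom.

Section Pressure.
Variables (F : fieldType) (gT : finGroupType) (G : {group gT}).
Variables (n : nat) (rG : mx_representation F G n).

Section ThroughSection.
Variables (W U : 'M[F]_n) (modW : mxmodule rG W) (modU : mxmodule rG U).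
Hypothesis sWU : (W <= U)%MS.
Variables (Vs : seq 'M[F]_(\rank <<in_factmod W U>>%MS))
  (csA : mx_composition_series (section_repr modW modU) Vs).
Local Notation preimage := (section_preimage (W := W) (U := U)).

Lemma factor_pressure_preimage_segment (Ws : seq 'M[F]_n)
    (cs : mx_composition_series rG Ws) o :
    (o + size Vs <= size Ws)%N ->
    (forall i, (i <= size Vs)%N -> ((0 :: Ws)`_(i + o) :=: preimage (0 :: Vs)`_i)%MS) ->
  \sum_(o <= k < o + size Vs) factor_pressure cs k = series_pressure csA.
Proof.
move=> le_o WsE; rewrite series_pressureE -{1}[o]add0n big_addn addKn.
apply: eq_big_nat => i /andP[_ lt_i].
have lt_io : (i + o < size Ws)%N by rewrite addnC; apply: leq_trans le_o; rewrite ltn_add2l.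
have modVs := proj1 csA; have modWs := proj1 cs.
have mod'i := mx_subseries_module' i modVs; have modi := mx_subseries_module i modVs.
have sVi : ((0 :: Vs)`_i <= Vs`_i)%MS by case: (proj2 csA i lt_i) => /ltmxW.
have Pmod'i := section_preimage_module mod'i; have Pmodi := section_preimage_module modi.
have rsimP := section_preimage_rsim mod'i modi Pmod'i Pmodi sVi.
have rsimW := section_eqmx Pmod'i (mx_subseries_module' (i + o) modWs) Pmodi
  (mx_subseries_module (i + o) modWs)
  (eqmx_sym (WsE i (ltnW lt_i))) (eqmx_sym (WsE i.+1 lt_i)).
rewrite !factor_pressureE //.
by have [-> _] := zpressure_rsim (mx_rsim_trans rsimP rsimW).
Qed.

(* Refine [0 <= W <= U <= 1] into a composition series of [rG] whose middle
   segment consists of the preimages of the series [Vs] of [U / W]. *)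
Lemma series_through_section : full_series Vs ->
  classically (exists Ws, exists cs : mx_composition_series rG Ws, full_series Ws /\
    exists2 o, (o + size Vs <= size Ws)%N &
      \sum_(o <= k < o + size Vs) factor_pressure cs k = series_pressure csA).
Proof.
move=> fullVs; have mod0 : mxmodule rG (0 : 'M_n) := mxmodule0 rG n.
have mod1 : mxmodule rG (1%:M : 'M_n) := mxmodule1 rG.
apply: classic_bind (mx_Schreier (rG := section_repr mod0 modW) (U := [::]) isT isT).
case=> T1 [csT1 /eqmxP fullT1 _].
apply: classic_bind (mx_Schreier (rG := section_repr modU mod1) (U := [::]) isT isT).
case=> T3 [csT3 /eqmxP fullT3 _]; apply/classicW.
set L1 := [seq section_preimage Y | Y <- T1]; set L2 := map preimage Vs.
set L3 := [seq section_preimage Y | Y <- T3].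
have L1E : (last 0 L1 :=: W)%MS := last_section_preimage (sub0mx _ W) csT1 fullT1.
have L2E : (last (last 0 L1) L2 :=: U)%MS.
  exact: eqmx_trans (last_eqmx L2 L1E) (last_section_preimage sWU csA fullVs).
have csL : mx_series_from rG 0 (L1 ++ L2 ++ L3).
  apply: mx_series_from_cat; first exact: mx_series_from_preimage csT1.
  apply: mx_series_from_cat.
    exact: eqmx_mx_series_from (eqmx_sym L1E) (mx_series_from_preimage csA).
  apply: eqmx_mx_series_from (eqmx_sym L2E) (mx_series_from_preimage csT3).
have sizeL2 : size L2 = size Vs by rewrite size_map.
exists (L1 ++ L2 ++ L3), csL; split.
  apply/eqmxP; rewrite !last_cat.
  exact: eqmx_trans (last_eqmx L3 L2E) (last_section_preimage (submx1 U) csT3 fullT3).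
have le_o : (size L1 + size Vs <= size (L1 ++ L2 ++ L3))%N.
  by rewrite !size_cat sizeL2 addnA leq_addr.
exists (size L1) => //; apply: (factor_pressure_preimage_segment csL le_o) => i le_i.
rewrite addnC nth_cons_cat; case: i le_i => [|i] lt_i /=.
  exact: eqmx_trans L1E (eqmx_sym (section_preimage0 W U)).
by rewrite nth_cat sizeL2 lt_i (nth_map 0).
Qed.

End ThroughSection.
End Pressure.

Section Bounds.
Variables (F : fieldType) (gT : finGroupType) (G : {group gT}).
Variables (n : nat) (rG : mx_representation F G n).
Hypotheses (selfdual : factors_H1_selfdual rG)
  (no_sub : ~ has_trivial_submodule rG) (no_quot : ~ has_trivial_quotient rG).
Variables (Us : seq 'M[F]_n) (cs : mx_composition_series rG Us).
Hypothesis fullUs : full_series Us.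

Lemma subquotient_pressure_bounds (W U : 'M_n) (modW : mxmodule rG W)
    (modU : mxmodule rG U) (sWU : (W <= U)%MS)
    (Vs : seq 'M_(\rank <<in_factmod W U>>%MS))
    (csA : mx_composition_series (section_repr modW modU) Vs) :
  full_series Vs -> - series_pressure cs <= series_pressure csA <= series_pressure cs.
Proof.
move=> fullVs; apply: (series_through_section (csA := csA) sWU fullVs).
case=> Ws [csW [fullWs [o le_os sumE]]].
have le_o : (o <= size Ws)%N := leq_trans (leq_addr _ _) le_os.
have ge0 := partial_pressures_ge0 csW selfdual fullWs no_sub no_quot.
have [pre_o suf_o] := ge0 _ le_o; have [pre_os suf_os] := ge0 _ le_os.
rewrite (series_pressure_JH cs csW fullUs fullWs) (series_pressure_split csW le_o) -sumE.
rewrite (@big_cat_nat _ _ _ (o + size Vs) o) ?leq_addr // in suf_o *.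
rewrite (@big_cat_nat _ _ _ o 0 (o + size Vs)) ?leq_addr // in pre_os.
move: pre_o suf_o pre_os suf_os; move: (\sum_(0 <= i < o) _) => a.
move: (\sum_(o <= i < o + size Vs) _) (\sum_(o + size Vs <= i < size Ws) _) => b c.
move=> a_ge0 bc_ge0 ab_ge0 c_ge0.
have {}bc_ge0 : 0 <= b + c := bc_ge0; have {}ab_ge0 : 0 <= a + b := ab_ge0.
by change (- (a + (b + c)) <= b <= a + (b + c)); apply/andP; split; lia.
Qed.

Lemma factor_pressure_bounds i : (i < size Us)%N ->
  factor_pressure cs i <= series_pressure cs /\
  0 <= series_pressure cs + factor_pressure cs i.
Proof.
move=> lt_i; have ge0 := partial_pressures_ge0 cs selfdual fullUs no_sub no_quot.
have [pre_i suf_i] := ge0 _ (ltnW lt_i); have [pre_i1 suf_i1] := ge0 _ lt_i.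
rewrite (series_pressure_split cs (ltnW lt_i)) [\sum_(i <= _ < _) _]big_ltn //.
rewrite big_ltn // in suf_i; rewrite big_nat_recr //= in pre_i1.
move: pre_i suf_i pre_i1 suf_i1; move: (\sum_(0 <= j < i) _) => a.
move: (\sum_(i.+1 <= j < size Us) _) (factor_pressure cs i) => b c.
move=> a_ge0 cb_ge0 ac_ge0 b_ge0.
have {}cb_ge0 : 0 <= c + b := cb_ge0; have {}ac_ge0 : 0 <= a + c := ac_ge0.
by change (c <= a + (c + b) /\ 0 <= a + (c + b) + c); split; lia.
Qed.

End Bounds.

Lemma factor_pressure_trivial (F : fieldType) (gT : finGroupType) (G : {group gT})
    (p : nat) (charFp : p \in [pchar F]) (OpG : Oup p G = G)
    n (rG : mx_representation F G n) (Us : seq 'M[F]_n)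
    (cs : mx_composition_series rG Us) i :
  is_trivial_repr (series_repr i cs) ->
  H1dim G (series_repr i cs) = 0%N /\ factor_pressure cs i = -1.
Proof.
move=> triv_i; have H1_0 : H1dim G (series_repr i cs) = 0%N.
  apply: (H1dim_trivial_action charFp OpG) => x Gx.
  by case/andP: triv_i => _ /forall_inP/(_ x Gx)/eqP.
by rewrite /factor_pressure H1_0 triv_i.
Qed.

Theorem proposition1p9 (F : fieldType) (p : nat) (gT : finGroupType) (G : {group gT})
    (charFp : p \in [pchar F]) (OpG : Oup p G = G) :
  (* main statement *)
  (forall (n : nat) (rG : mx_representation F G n),
     factors_H1_selfdual rG ->
     has_trivial_factor rG ->
     ~ has_trivial_submodule rG ->
     ~ has_trivial_quotient rG ->
     forall (Us : seq 'M[F]_n) (cs : mx_composition_series rG Us),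
       full_series Us ->
     forall (W U : 'M[F]_n) (modW : mxmodule rG W) (modU : mxmodule rG U),
       (W <= U)%MS ->
     forall (Vs : seq 'M[F]_(\rank <<in_factmod W U>>%MS))
            (csA : mx_composition_series (section_repr modW modU) Vs),
       full_series Vs ->
       - series_pressure cs <= series_pressure csA <= series_pressure cs)
  /\
  (* first consequence *)
  (forall (n : nat) (rG : mx_representation F G n),
     factors_H1_selfdual rG ->
     forall (Us : seq 'M[F]_n) (cs : mx_composition_series rG Us),
       full_series Us ->
       (exists2 i : nat, (i < size Us)%N & is_trivial_repr (series_repr i cs)) ->
       series_pressure cs <= 0 ->
       has_trivial_submodule rG \/ has_trivial_quotient rG)
  /\
  (* second consequence *)
  (forall (n : nat) (rG : mx_representation F G n),
     factors_H1_selfdual rG ->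
     forall (Us : seq 'M[F]_n) (cs : mx_composition_series rG Us),
       full_series Us ->
       (exists2 i : nat, (i < size Us)%N &
          series_pressure cs < (H1dim G (series_repr i cs))%:Z) ->
       has_trivial_submodule rG \/ has_trivial_quotient rG).
Proof.
split.
  (* The bounds hold without assuming a trivial composition factor. *)
  move=> n rG selfdual _ no_sub no_quot Us cs fullUs W U modW modU sWU.
  exact: subquotient_pressure_bounds.
split=> n rG selfdual Us cs fullUs [i lt_i factor_i];
  (have [? | no_sub] := classic (has_trivial_submodule rG); first by left);
  (have [? | no_quot] := classic (has_trivial_quotient rG); first by right);
  have [le_P ge_P] := factor_pressure_bounds selfdual no_sub no_quot cs fullUs lt_i.
  have [_ Pi_1] := factor_pressure_trivial charFp OpG factor_i.
  by rewrite Pi_1 in ge_P; lia.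
have [triv_i | ntriv_i] := boolP (is_trivial_repr (series_repr i cs)).
  have [H1_0 Pi_1] := factor_pressure_trivial charFp OpG triv_i.
  by rewrite H1_0 in factor_i; rewrite Pi_1 in ge_P; lia.
by move: le_P factor_i; rewrite /factor_pressure (negbTE ntriv_i); lia.
Qed.
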